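(* Let $f\in\mathbf C\{x\}[y]$ be a reduced distinguished polynomial of degree $n\ge2$, written $f=\prod_{i=1}^n(y-a_i)$ with $\sum_ia_i=0$. Then for every $w\in\mathcal E\cap\mathcal O$, $$\mathrm{val}(w)\ge n\delta\rho(w)-\sup\{m_i:1\le i\le n\}.$$ In particular $\mathcal E\cap\mathcal O_q\subset\mathcal E_0$ as soon as $q\ge\sup_i m_i/(n\delta)$.
   Context: Distinguished: monic in $y$ with $f(0,y)=y^n$; the $a_i$ are pairwise distinct Puiseux series in $\overline K=\bigcup_{e\ge1}\mathbf C[[x^{1/e}]][1/x]$ with valuation $\nu$. $m_{i,j}=\nu(a_i-a_j)$, $m_i=\sum_{j\ne i}m_{i,j}$, $\delta=\inf_i\nu(a_i)$ ($>0$). $\mathcal O=\mathbf C\{x,y\}$. $\varepsilon_i=\prod_{j\ne i}(y-a_j)$; for $w=\sum w_i\varepsilon_i$ of degree $<n$, $\mathrm{val}(w)=\inf\nu(w_i)$. $\mathcal E$ is the $\mathbf C((x))$-space of polynomials in $y$ of degree $<n$, $\mathcal E_0=\{w\in\mathcal E:\mathrm{val}(w)\ge0\}$. For $w=\sum w_{k,l}x^ky^l\in\mathcal O$ nonzero, $\rho(w)=\inf\{k/(n\delta)+l/n:w_{k,l}\ne0\}$, and $\mathcal O_q=\{w\in\mathcal O:\rho(w)\ge q\}$ (with $\rho(0)=+\infty$). *)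

From HB Require Import structures.
From mathcomp Require Import all_boot all_order all_algebra.
From mathcomp Require Import complex.
From mathcomp Require Import boolp classical_sets reals constructive_ereal ereal.

Set Implicit Arguments.
Unset Strict Implicit.
Unset Printing Implicit Defensive.

Import Order.TTheory GRing.Theory Num.Theory.
Local Open Scope ring_scope.

Section FPS.
Variable K : comNzRingType.

Record fps := FPS { fcoef : nat -> K }.

HB.instance Definition _ := gen_eqMixin fps.
HB.instance Definition _ := gen_choiceMixin fps.

Lemma fpsP (a b : fps) : (forall k, fcoef a k = fcoef b k) -> a = b.
Proof. by case: a b => f [g] /= H; congr FPS; apply: funext. Qed.

Definition fps0 := FPS (fun _ => 0).
Definition fpsadd a b := FPS (fun k => fcoef a k + fcoef b k).
Definition fpsopp a := FPS (fun k => - fcoef a k).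

Lemma fpsaddA : associative fpsadd.
Proof. by move=> a b c; apply: fpsP => k /=; rewrite addrA. Qed.
Lemma fpsaddC : commutative fpsadd.
Proof. by move=> a b; apply: fpsP => k /=; rewrite addrC. Qed.
Lemma fpsadd0 : left_id fps0 fpsadd.
Proof. by move=> a; apply: fpsP => k /=; rewrite add0r. Qed.
Lemma fpsaddN : left_inverse fps0 fpsopp fpsadd.
Proof. by move=> a; apply: fpsP => k /=; rewrite addNr. Qed.

HB.instance Definition _ := GRing.isZmodule.Build fps fpsaddA fpsaddC fpsadd0 fpsaddN.

Definition fpsmul a b :=
  FPS (fun k => \sum_(j < k.+1) fcoef a j * fcoef b (k - j)).
Definition fps1 := FPS (fun k => (k == 0%N)%:R).

Definition trunc (k : nat) (a : fps) : {poly K} := \poly_(i < k.+1) fcoef a i.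

Lemma truncE k j a : (j <= k)%N -> (trunc k a)`_j = fcoef a j.
Proof. by move=> hj; rewrite coef_poly ltnS hj. Qed.

Lemma fcoef_mul_trunc k a b : fcoef (fpsmul a b) k = (trunc k a * trunc k b)`_k.
Proof.
rewrite coefM /=; apply: eq_bigr => j _.
by rewrite !truncE // ?leq_subr // -ltnS ltn_ord.
Qed.

Lemma coef_mul_eq k (P Q S : {poly K}) :
  (forall j, (j <= k)%N -> P`_j = Q`_j) -> (P * S)`_k = (Q * S)`_k.
Proof.
by move=> H; rewrite !coefM; apply: eq_bigr => j _; rewrite H // -ltnS ltn_ord.
Qed.

Lemma trunc_mul k a b j : (j <= k)%N ->
  (trunc k (fpsmul a b))`_j = (trunc k a * trunc k b)`_j.
Proof.
move=> hj; rewrite truncE // fcoef_mul_trunc coefM.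
rewrite coefM; apply: eq_bigr => i _.
have hi : (i <= j)%N by rewrite -ltnS ltn_ord.
have hij : (j - i <= j)%N by apply: leq_subr.
rewrite (truncE _ (leq_trans hi hj)) (truncE _ (leq_trans hij hj)).
by rewrite (truncE _ hi) (truncE _ hij).
Qed.

Lemma fpsmulA : associative fpsmul.
Proof.
move=> a b c; apply: fpsP => k; rewrite !fcoef_mul_trunc.
have -> : (trunc k a * trunc k (fpsmul b c))`_k
          = (trunc k b * trunc k c * trunc k a)`_k.
  rewrite mulrC; apply: coef_mul_eq => j hj; by rewrite trunc_mul.
have -> : (trunc k (fpsmul a b) * trunc k c)`_k
          = (trunc k a * trunc k b * trunc k c)`_k.
  by apply: coef_mul_eq => j hj; rewrite trunc_mul.
have E : trunc k b * trunc k c * trunc k a = trunc k a * trunc k b * trunc k c.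
  by rewrite mulrC mulrA.
by rewrite E.
Qed.

Lemma fpsmulC : commutative fpsmul.
Proof. by move=> a b; apply: fpsP => k; rewrite !fcoef_mul_trunc mulrC. Qed.

Lemma fpsmul1 : left_id fps1 fpsmul.
Proof.
move=> a; apply: fpsP => k; rewrite fcoef_mul_trunc.
rewrite (coef_mul_eq _ (Q := 1)); first by rewrite mul1r truncE.
by move=> j hj; rewrite truncE // coef1.
Qed.

Lemma fpsmulDl : left_distributive fpsmul fpsadd.
Proof.
move=> a b c; apply: fpsP => k /=; rewrite -big_split /=.
by apply: eq_bigr => j _; rewrite mulrDl.
Qed.

Lemma fps1_neq0 : fps1 != fps0.
Proof.
apply/eqP => /(congr1 (fun x => fcoef x 0)) /= /eqP.
by rewrite oner_eq0.
Qed.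

HB.instance Definition _ :=
  GRing.Zmodule_isComNzRing.Build fps fpsmulA fpsmulC fpsmul1 fpsmulDl fps1_neq0.

Definition fpsX : fps := FPS (fun k => (k == 1%N)%:R).

(* substitution  x := t^e : a series in x viewed as a series in t = x^(1/e) *)
Definition ramify (e : nat) (c : fps) : fps :=
  FPS (fun m => if (e %| m)%N then fcoef c (m %/ e) else 0).

End FPS.

Section Puiseux.
Variable R : realType.
Local Notation C := R[i].
Local Open Scope complex_scope.
Local Open Scope ring_scope.

Definition convergent (c : fps C) : Prop :=
  exists r : R, 0 < r /\ exists M : R,
    forall k, `|fcoef c k| * (r ^+ k)%:C <= M%:C.

(* an element of C{x}[y] (or C((x))[y]), given by its y-coefficients
   w`_l = sum_k w_{k,l} x^k, lies in O = C{x,y} *)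
Definition in_O (w : {poly fps C}) : Prop :=
  exists r : R, 0 < r /\ exists M : R,
    forall k l, `|fcoef w`_l k| * (r ^+ (k + l))%:C <= M%:C.

Definition in_E (n : nat) (w : {poly fps C}) : bool := (size w <= n)%N.

Local Open Scope ereal_scope.

(* valuation nu (normalised so that nu(x) = 1) of the Puiseux series
   u(x^(1/e)) in C[[x^(1/e)]], u given as a series in t = x^(1/e);
   nu(0) = +oo *)
Definition puis_val (e : nat) (u : fps C) : \bar R :=
  ereal_inf [set ((k%:R / e%:R)%R)%:E | k in [set k : nat | fcoef u k != 0%R]].

(* valuation of the element t^(-N) u of C[[x^(1/e)]][1/x] *)
Definition laurent_val (e N : nat) (u : fps C) : \bar R :=
  puis_val e u - ((N%:R / e%:R)%R)%:E.

Variables (n e : nat) (a : 'I_n -> fps C).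

Definition m_ij (i j : 'I_n) : \bar R := puis_val e (a i - a j)%R.
Definition m_i (i : 'I_n) : \bar R := \sum_(j < n | j != i) m_ij i j.
Definition sup_m : \bar R := ereal_sup [set m_i i | i in [set: 'I_n]].

Definition eps (i : 'I_n) : {poly fps C} := (\prod_(j < n | j != i) ('X - (a j)%:P))%R.

(* w = sum_i w_i eps_i with w_i = t^(-N) u_i in C[[x^(1/e)]][1/x]
   (w has coefficients in C((x)); x = t^e) *)
Definition Edecomp (w : {poly fps C}) (N : nat) (u : 'I_n -> fps C) : Prop :=
  ((fpsX C) ^+ N *: map_poly (ramify e) w = \sum_(i < n) u i *: eps i)%R.

(* val(w) = inf_i nu(w_i); the decomposition is unique (a_i distinct),
   the set below is the singleton {valE w} *)
Definition valE (w : {poly fps C}) : \bar R :=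
  ereal_inf [set v | exists N u, Edecomp w N u /\
     v = ereal_inf [set laurent_val e N (u i) | i in [set: 'I_n]]].

End Puiseux.

Definition rho (R : realType) (n : nat) (delta : R) (w : {poly fps R[i]}) : \bar R :=
  ereal_inf [set v : \bar R | exists k l : nat, fcoef w`_l k != 0 /\
               v = ((k%:R / (n%:R * delta) + l%:R / n%:R)%R)%:E].

(* Decompose [w = sum_i w_i eps_i] and evaluate at [y = a_i]: since [eps_j(a_i) = 0]
   for [j <> i], one gets [w(a_i) = w_i eps_i(a_i)], hence
   [nu(w_i) = nu(w(a_i)) - m_i].  Each monomial [x^k y^l] of [w] evaluated at [a_i]
   has valuation [k + l nu(a_i) >= k + l delta >= n delta (k/(n delta) + l/n)], so
   [nu(w(a_i)) >= n delta rho(w)].  Finally [delta > 0] because [f(0, y) = y^n]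
   forces every [a_i] to vanish at [x = 0]. *)
From HB Require Import structures.
From mathcomp Require Import all_boot all_order all_algebra.
From mathcomp Require Import complex.
From mathcomp Require Import boolp classical_sets reals constructive_ereal ereal.
From mathcomp Require Import ring lra zify.
Set Implicit Arguments. Unset Strict Implicit. Unset Printing Implicit Defensive.
Import Order.TTheory GRing.Theory Num.Theory.
Local Open Scope ring_scope.

Section FpsRing.
Variable K : comNzRingType.
Local Notation F := (fps K).

Lemma fcoef0 k : fcoef (0 : F) k = 0. Proof. by []. Qed.
Lemma fcoef1 k : fcoef (1 : F) k = (k == 0%N)%:R. Proof. by []. Qed.
Lemma fcoefD (u v : F) k : fcoef (u + v) k = fcoef u k + fcoef v k. Proof. by []. Qed.
Lemma fcoefM (u v : F) k :
  fcoef (u * v) k = \sum_(j < k.+1) fcoef u j * fcoef v (k - j).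
Proof. by []. Qed.

Lemma fps_lowest_coef (u : F) : u != 0 ->
  exists p, fcoef u p != 0 /\ forall k, (k < p)%N -> fcoef u k = 0.
Proof.
move=> u0; have ex : exists k, fcoef u k != 0.
  apply/not_existsP => H; move/eqP: u0; apply; apply: fpsP => k /=.
  by have /negP := H k; rewrite negbK => /eqP.
exists (ex_minn ex); case: ex_minnP => p hp hmin; split => // k hk.
by apply/eqP; apply: contraTT hk => /hmin; rewrite -leqNgt.
Qed.

Lemma fcoefM_lowest (u v : F) p q :
  (forall k, (k < p)%N -> fcoef u k = 0) -> (forall k, (k < q)%N -> fcoef v k = 0) ->
  (forall k, (k < p + q)%N -> fcoef (u * v) k = 0) /\
  fcoef (u * v) (p + q) = fcoef u p * fcoef v q.
Proof.
move=> hu hv; split.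
  move=> k hk; rewrite fcoefM big1 // => j _.
  case: (ltnP j p) => hj; first by rewrite hu // mul0r.
  by rewrite hv ?mulr0 //; have := ltn_ord j; lia.
have hp : (p < (p + q).+1)%N by lia.
rewrite fcoefM (bigD1 (Ordinal hp)) //= big1 ?addr0; first by rewrite addKn.
move=> j /eqP hj; case: (ltnP j p) => hjp; first by rewrite hu // mul0r.
rewrite hv ?mulr0 //.
have : nat_of_ord j != p by apply/eqP => hjp'; apply: hj; apply: val_inj.
by have := ltn_ord j; lia.
Qed.

Definition fps_eval0 (u : F) : K := fcoef u 0.

Lemma fps_eval0_nmod : nmod_morphism fps_eval0.
Proof. by []. Qed.
HB.instance Definition _ :=
  GRing.isNmodMorphism.Build F K fps_eval0 fps_eval0_nmod.

Lemma fps_eval0_monoid : monoid_morphism fps_eval0.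
Proof. by split => // u v; rewrite /fps_eval0 fcoefM big_ord1. Qed.
HB.instance Definition _ :=
  GRing.isMonoidMorphism.Build F K fps_eval0 fps_eval0_monoid.

End FpsRing.

Lemma fps_mulf_neq0 (K : idomainType) (u v : fps K) : u != 0 -> v != 0 -> u * v != 0.
Proof.
move=> /fps_lowest_coef [p [hp hu]] /fps_lowest_coef [q [hq hv]].
have [_ low] := fcoefM_lowest hu hv.
apply/eqP => uv0; move: low; rewrite uv0 fcoef0 => /esym /eqP.
by rewrite mulf_eq0 (negbTE hp) (negbTE hq).
Qed.

Lemma fps_prodf_neq0 (K : idomainType) I (r : seq I) (P : pred I) (G : I -> fps K) :
  (forall i, P i -> G i != 0) -> \prod_(i <- r | P i) G i != 0.
Proof.
by move=> h; elim/big_ind: _ => //; [exact: oner_neq0 | exact: fps_mulf_neq0].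
Qed.

Section PuiseuxValuation.
Variable R : realType.
Local Notation F := (fps R[i]).
Variable e : nat.
Hypothesis e_gt0 : (0 < e)%N.
Local Notation nu := (@puis_val R e).

Lemma puis_val_geP (u : F) (x : \bar R) :
  (x <= nu u)%E <-> (forall k, fcoef u k != 0%R -> x <= (k%:R / e%:R)%:E)%E.
Proof.
split; last by move=> h; apply: le_ereal_inf_tmp => y [k hk <-]; exact: h.
by move=> h k hk; apply: le_trans h _; apply: ereal_inf_lbound; exists k.
Qed.

Lemma puis_val0 : nu 0 = +oo%E.
Proof. by apply/eqP; rewrite eq_le leey /=; apply/puis_val_geP => k; rewrite eqxx. Qed.

Lemma puis_val_ge0 (u : F) : (0 <= nu u)%E.
Proof. by apply/puis_val_geP => k _; rewrite lee_fin divr_ge0. Qed.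

Lemma puis_val_lowest (u : F) p : fcoef u p != 0 ->
  (forall k, (k < p)%N -> fcoef u k = 0) -> nu u = (p%:R / e%:R)%:E.
Proof.
move=> hp hmin; apply/eqP; rewrite eq_le; apply/andP; split.
  by apply: ereal_inf_lbound; exists p.
apply/puis_val_geP => k hk; rewrite lee_fin ler_pM2r ?invr_gt0 ?ltr0n // ler_nat.
by rewrite leqNgt; apply/negP => /hmin /eqP; apply/negP.
Qed.

Lemma puis_val_fin (u : F) : u != 0 -> exists r : R, nu u = r%:E.
Proof. by move=> /fps_lowest_coef [p [hp hm]]; exists (p%:R / e%:R); apply: puis_val_lowest. Qed.

Lemma puis_valM (u v : F) : nu (u * v) = (nu u + nu v)%E.
Proof.
have [->|u0] := eqVneq u 0.
  by rewrite mul0r puis_val0 addye // gt_eqF // (lt_le_trans _ (puis_val_ge0 v)) ?ltNy0.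
have [->|v0] := eqVneq v 0.
  by rewrite mulr0 puis_val0 addey // gt_eqF // (lt_le_trans _ (puis_val_ge0 u)) ?ltNy0.
have [p [hp hu]] := fps_lowest_coef u0; have [q [hq hv]] := fps_lowest_coef v0.
have [low lowE] := fcoefM_lowest hu hv.
rewrite (puis_val_lowest hp hu) (puis_val_lowest hq hv) (puis_val_lowest _ low).
  by rewrite -EFinD natrD mulrDl.
by rewrite lowE mulf_neq0.
Qed.

Lemma puis_val1 : nu 1 = 0%E.
Proof. by rewrite (@puis_val_lowest _ 0) ?mul0r // fcoef1 oner_neq0. Qed.

Lemma puis_val_prod I (r : seq I) (P : pred I) (G : I -> F) :
  nu (\prod_(i <- r | P i) G i) = (\sum_(i <- r | P i) nu (G i))%E.
Proof. exact: (big_morph _ puis_valM puis_val1). Qed.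

Lemma puis_val_sum_ge I (r : seq I) (P : pred I) (G : I -> F) x :
  (forall i, P i -> x <= nu (G i))%E -> (x <= nu (\sum_(i <- r | P i) G i)%R)%E.
Proof.
move=> h; elim/big_ind: _ => //; first by rewrite puis_val0 leey.
move=> u v /puis_val_geP hu /puis_val_geP hv; apply/puis_val_geP => k.
rewrite fcoefD; have [u0|u0] := eqVneq (fcoef u k) 0; last by move=> _; apply: hu.
by rewrite u0 add0r; apply: hv.
Qed.

Lemma puis_val_fpsXn N : nu (fpsX R[i] ^+ N) = (N%:R / e%:R)%:E.
Proof.
have X1 : nu (fpsX R[i]) = (1 / e%:R)%:E.
  by rewrite (@puis_val_lowest _ 1) ?oner_neq0 //; case.
elim: N => [|N IH]; first by rewrite expr0 puis_val1 mul0r.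
by rewrite exprS puis_valM IH X1 -EFinD -mulrDl -natr1 addrC.
Qed.

Lemma puis_val_expr_ge (b : F) (d : R) l :
  (d%:E <= nu b)%E -> ((l%:R * d)%:E <= nu (b ^+ l)%R)%E.
Proof.
move=> hb; elim: l => [|l IH]; first by rewrite expr0 puis_val1 mul0r.
by rewrite exprS puis_valM -natr1 mulrDl mul1r addrC EFinD leeD.
Qed.

Lemma ramify0 : ramify e (0 : F) = 0.
Proof. by apply: fpsP => m /=; case: ifP. Qed.

Lemma puis_val_ramify (c : F) k0 : fcoef c k0 != 0 ->
  (forall k, (k < k0)%N -> fcoef c k = 0) -> nu (ramify e c) = (k0%:R)%:E.
Proof.
move=> hk hm; rewrite (@puis_val_lowest _ (k0 * e)).
- by rewrite natrM mulfK // pnatr_eq0 -lt0n.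
- by rewrite /= dvdn_mull // mulnK.
move=> m hmk /=; case: ifP => // /dvdnP [q mE].
by rewrite mE mulnK // hm // -(ltn_pmul2r e_gt0) -mE.
Qed.

Lemma puis_val_horner_ge (w : {poly F}) (b : F) (delta : R) (n : nat) :
  (0 < n)%N -> 0 < delta -> (delta%:E <= nu b)%E ->
  ((n%:R * delta)%:E * rho n delta w <= nu (map_poly (ramify e) w).[b])%E.
Proof.
move=> n_gt0 delta_gt0 hb; rewrite horner_coef; apply: puis_val_sum_ge => l _.
rewrite coef_map_id0 ?ramify0 // puis_valM.
have [->|wl0] := eqVneq w`_l 0.
  by rewrite ramify0 puis_val0 addye ?leey // gt_eqF // (lt_le_trans _ (puis_val_ge0 _)) ?ltNy0.
have [k [hk hm]] := fps_lowest_coef wl0; rewrite (puis_val_ramify hk hm).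
apply: (@le_trans _ _ ((k%:R)%:E + (l%:R * delta)%:E)%E).
  have -> : ((k%:R)%:E + (l%:R * delta)%:E)%E =
            ((n%:R * delta)%:E * (k%:R / (n%:R * delta) + l%:R / n%:R)%:E)%E.
    rewrite -EFinM -EFinD; congr (_%:E); field.
    by rewrite pnatr_eq0 -lt0n n_gt0 /= gt_eqF.
  apply: lee_wpmul2l; first by rewrite lee_fin mulr_ge0 // ltW.
  by apply: ereal_inf_lbound; exists k, l.
by apply: leeD2l; apply: puis_val_expr_ge.
Qed.

End PuiseuxValuation.

Lemma lee_subB_of_addE (R : realType) (L W y s : \bar R) (c m : R) :
  (L <= W)%E -> (m%:E <= s)%E -> (c%:E + W = y + m%:E)%E -> (L - s <= y - c%:E)%E.
Proof.
move: L W y s => [L| |] [W| |] [y| |] [s| |] //=; rewrite ?lee_fin ?leey ?leNye //=;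
  try (move=> _ _ []; lra); try (move=> *; lra); try done.
all: move=> h1 h2 h3; try (case: h3; lra).
Qed.

Lemma mule_sube_ge0 (R : realType) (D q : R) (s r : \bar R) :
  0 < D -> (-oo < s)%E -> (0 <= r)%E ->
  (s * (D^-1)%:E <= q%:E)%E -> (q%:E <= r)%E -> (0 <= D%:E * r - s)%E.
Proof.
move=> D_gt0; case: s => [s| |] //; case: r => [r| |] //=.
- rewrite !lee_fin ler_pdivrMr // => _ _ hq hqr; rewrite subr_ge0.
  by have := ler_wpM2l (ltW D_gt0) hqr; lra.
- by move=> *; rewrite mulry gtr0_sg // mul1e addye.
- by rewrite mulyr gtr0_sg ?invr_gt0 // mul1e leye_eq.
- by rewrite mulyr gtr0_sg ?invr_gt0 // mul1e leye_eq.
Qed.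

Section DistinguishedRoots.
Variables (R : realType) (n e : nat) (f : {poly fps R[i]}) (a : 'I_n -> fps R[i]).
Variable delta : R.
Hypothesis n_gt0 : (0 < n)%N.
Hypothesis e_gt0 : (0 < e)%N.
Hypothesis f_at0 : map_poly (fun c : fps R[i] => fcoef c 0) f = 'X^n.
Hypothesis f_roots : map_poly (ramify e) f = \prod_(i < n) ('X - (a i)%:P).
Hypothesis a_inj : injective a.
Hypothesis deltaE : delta%:E = ereal_inf [set puis_val e (a i) | i in [set: 'I_n]].
Local Notation nu := (@puis_val R e).

Lemma root_eval0 i : fps_eval0 (a i) = 0.
Proof.
have : map_poly (@fps_eval0 _) (map_poly (ramify e) f) = 'X^n.
  rewrite -map_poly_comp_id0 // -f_at0; apply: eq_map_poly => c /=.
  by rewrite /fps_eval0 /= dvdn0 div0n.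
rewrite f_roots rmorph_prod => /(congr1 (horner^~ (fps_eval0 (a i)))).
rewrite hornerXn horner_prod (bigD1 i) //= map_polyXsubC hornerXsubC subrr mul0r.
by move/esym/eqP; rewrite expf_eq0 => /andP[_ /eqP].
Qed.

Lemma delta_le_root i : (delta%:E <= nu (a i))%E.
Proof. by rewrite deltaE; apply: ereal_inf_lbound; exists i. Qed.

Lemma delta_gt0 : 0 < delta.
Proof.
have root_ge i : ((1 / e%:R)%:E <= nu (a i))%E.
  apply/puis_val_geP => -[|k] hk; last by rewrite lee_fin ler_pM2r ?invr_gt0 ?ltr0n // ler1n.
  by move: hk; rewrite -/(fps_eval0 _) root_eval0 eqxx.
have : ((1 / e%:R)%:E <= delta%:E)%E.
  by rewrite deltaE; apply: le_ereal_inf_tmp => y [i _ <-]; exact: root_ge.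
by rewrite lee_fin; apply: lt_le_trans; rewrite divr_gt0 ?ltr0n.
Qed.

Lemma eps_horner_root i j : (eps a j).[a i] = \prod_(k < n | k != j) (a i - a k).
Proof. by rewrite /eps horner_prod; apply: eq_bigr => k _; rewrite hornerXsubC. Qed.

Lemma eps_horner_other_root i j : j != i -> (eps a j).[a i] = 0.
Proof. by move=> ji; rewrite eps_horner_root (bigD1 i) 1?eq_sym //= subrr mul0r. Qed.

Lemma m_iE i : m_i e a i = nu (eps a i).[a i].
Proof. by rewrite eps_horner_root (puis_val_prod e_gt0). Qed.

Lemma m_i_fin i : exists m : R, m_i e a i = m%:E.
Proof.
rewrite m_iE eps_horner_root; apply: (puis_val_fin e_gt0).
apply: fps_prodf_neq0 => k ki; rewrite subr_eq0; apply: contra ki => /eqP aE.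
by rewrite (a_inj aE).
Qed.

Lemma m_i_le_sup i : (m_i e a i <= sup_m e a)%E.
Proof. by apply: ereal_sup_ubound; exists i. Qed.

Lemma valE_ge (w : {poly fps R[i]}) :
  ((n%:R * delta)%:E * rho n delta w - sup_m e a <= valE e a w)%E.
Proof.
apply: le_ereal_inf_tmp => v [N [u [wE ->]]]; apply: le_ereal_inf_tmp => y [i _ <-].
have evalE := congr1 (horner^~ (a i)) wE; rewrite /= hornerZ horner_sum in evalE.
rewrite (bigD1 i) //= big1 ?addr0 in evalE; last first.
  by move=> j ji; rewrite hornerZ eps_horner_other_root ?mulr0.
have [m mE] := m_i_fin i; have m_le := m_i_le_sup i.
have := congr1 nu evalE.
rewrite hornerZ !(puis_valM e_gt0) (puis_val_fpsXn R e_gt0) -m_iE mE.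
apply: lee_subB_of_addE; last by rewrite -mE.
exact: (puis_val_horner_ge e_gt0 _ n_gt0 delta_gt0 (delta_le_root i)).
Qed.

Lemma rho_ge0 (w : {poly fps R[i]}) : (0 <= rho n delta w)%E.
Proof.
apply: le_ereal_inf_tmp => v [k [l [_ ->]]].
by rewrite lee_fin addr_ge0 // divr_ge0 // ?mulr_ge0 // ltW // delta_gt0.
Qed.

Lemma valE_ge0 (q : R) (w : {poly fps R[i]}) :
  (sup_m e a * ((n%:R * delta)^-1)%:E <= q%:E)%E ->
  (q%:E <= rho n delta w)%E -> (0 <= valE e a w)%E.
Proof.
move=> hq hqr; apply: le_trans (valE_ge w).
have [m mE] := m_i_fin (Ordinal n_gt0).
apply: mule_sube_ge0 hq hqr; last exact: rho_ge0.
  by rewrite mulr_gt0 ?ltr0n // delta_gt0.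
by apply: lt_le_trans (m_i_le_sup (Ordinal n_gt0)); rewrite mE ltNyr.
Qed.

End DistinguishedRoots.

Theorem mainTheorem17 (R : realType) (n e : nat) (f : {poly fps R[i]})
    (a : 'I_n -> fps R[i]) (delta : R) :
  (2 <= n)%N ->
  (* distinguished of degree n, with coefficients in C{x} *)
  f \is monic -> size f = n.+1 ->
  map_poly (fun c : fps R[i] => fcoef c 0) f = 'X^n ->
  (forall j, convergent f`_j) ->
  (* f = prod_i (y - a_i) with pairwise distinct Puiseux series a_i in
     C[[x^(1/e)]], and sum_i a_i = 0 *)
  (0 < e)%N ->
  map_poly (ramify e) f = \prod_(i < n) ('X - (a i)%:P) ->
  injective a ->
  \sum_(i < n) a i = 0 ->
  (* delta = inf_i nu(a_i) *)
  (delta%:E = ereal_inf [set puis_val e (a i) | i in [set: 'I_n]])%E ->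
  (forall w : {poly fps R[i]}, in_E n w -> in_O w ->
     ((n%:R * delta)%:E * rho n delta w - sup_m e a <= valE e a w)%E)
  /\
  (forall q : R, (sup_m e a * ((n%:R * delta)^-1)%:E <= q%:E)%E ->
     forall w : {poly fps R[i]}, in_E n w -> in_O w ->
       (q%:E <= rho n delta w)%E -> (0 <= valE e a w)%E).
Proof.
move=> n_ge2 _ _ f_at0 _ e_gt0 f_roots a_inj _ deltaE.
have n_gt0 : (0 < n)%N by apply: leq_trans n_ge2.
split=> [w _ _|q hq w _ _].
  exact: (valE_ge n_gt0 e_gt0 f_at0 f_roots a_inj deltaE).
exact: (valE_ge0 n_gt0 e_gt0 f_at0 f_roots a_inj deltaE).
Qed.
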